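(* For a ring $R$ the following are equivalent: (1) $Q_l(R)$ is a semi-simple ring; (2) $Q_{cl}(R)$ exists and is a semi-simple ring; (3) $R$ is a left order in a semi-simple ring; (4) $R$ has finite left rank, satisfies the ascending chain condition on left annihilators, and is semi-prime; (5) a left ideal of $R$ is essential iff it contains a regular element. If one of these conditions holds then $S_0(R)=\mathcal C_R$ and $Q_l(R)=Q_{cl}(R)$.
   Context: Rings are associative with $1$. $\mathcal C_R$ is the set of regular elements (non-zero-divisors on both sides) of $R$. A multiplicatively closed subset $S$ ($1\in S$, $0\notin S$) is a left Ore set if $Sr\cap Rs\ne\emptyset$ for all $r\in R,s\in S$, and a left denominator set if moreover $rs=0$ ($s\in S$) implies $tr=0$ for some $t\in S$. $S_0(R)$ is the largest (w.r.t. inclusion) left denominator set of $R$ contained in $\mathcal C_R$ (it exists), and $Q_l(R):=S_0(R)^{-1}R$. $Q_{cl}(R)$ is the classical left quotient ring $\mathcal C_R^{-1}R$, which exists iff $\mathcal C_R$ is a left Ore set. $R$ is a left order in a ring $Q$ (in which every regular element is invertible) if $\mathcal C_R$ is a left Ore set and $\mathcal C_R^{-1}R=Q$. $R$ has finite left rank if it contains no infinite direct sum of nonzero left ideals. *)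

From HB Require Import structures.
From mathcomp Require Import all_boot all_algebra.
Set Implicit Arguments. Unset Strict Implicit. Unset Printing Implicit Defensive.
Import GRing.Theory.
Local Open Scope ring_scope.

Section RingDefs.
Variable R : nzRingType.

Definition subsetR (A B : R -> Prop) := forall x, A x -> B x.

Definition regular (x : R) : Prop :=
  (forall y, x * y = 0 -> y = 0) /\ (forall y, y * x = 0 -> y = 0).

Definition mult_closed (S : R -> Prop) : Prop :=
  [/\ S 1, ~ S 0 & forall a b, S a -> S b -> S (a * b)].

Definition left_ore (S : R -> Prop) : Prop :=
  mult_closed S /\
  forall r s, S s -> exists s' r', S s' /\ s' * r = r' * s.

Definition left_denominator (S : R -> Prop) : Prop :=
  left_ore S /\
  forall r s, S s -> r * s = 0 -> exists t, S t /\ t * r = 0.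

(* S_0(R): the largest left denominator set contained in C_R, realised as the
   union of all such sets (the paper proves this union is itself one). *)
Definition S0 (x : R) : Prop :=
  exists T : R -> Prop, [/\ left_denominator T, subsetR T regular & T x].

Definition is_left_quotient (S : R -> Prop) (Q : nzRingType)
  (f : {rmorphism R -> Q}) : Prop :=
  [/\ forall s, S s -> exists u : Q, u * f s = 1 /\ f s * u = 1,
      forall q : Q, exists s r, S s /\ f s * q = f r
      & forall r, f r = 0 <-> exists s, S s /\ s * r = 0].

Definition left_ideal (L : R -> Prop) : Prop :=
  [/\ L 0, forall x y, L x -> L y -> L (x + y) & forall r x, L x -> L (r * x)].

Definition two_sided_ideal (I : R -> Prop) : Prop :=
  left_ideal I /\ forall x r, I x -> I (x * r).

Definition nonzero_set (L : R -> Prop) : Prop := exists x, L x /\ x != 0.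

Definition finite_left_rank : Prop :=
  ~ exists I : nat -> R -> Prop,
      (forall n, left_ideal (I n) /\ nonzero_set (I n)) /\
      (forall (n : nat) (x : nat -> R),
         (forall i, (i <= n)%N -> I i (x i)) ->
         \sum_(i < n.+1) x i = 0 -> forall i, (i <= n)%N -> x i = 0).

Definition lann (X : R -> Prop) (r : R) : Prop := forall x, X x -> r * x = 0.

Definition acc_left_annihilators : Prop :=
  forall A : nat -> R -> Prop,
    (forall n, exists X, forall r, A n r <-> lann X r) ->
    (forall n, subsetR (A n) (A n.+1)) ->
    exists N, forall n, (N <= n)%N -> subsetR (A n) (A N).

Definition semiprime : Prop :=
  forall I : R -> Prop, two_sided_ideal I ->
    forall n : nat, (forall s : seq R, size s = n.+1 ->
                       (forall x, x \in s -> I x) -> \prod_(x <- s) x = 0) ->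
    forall x, I x -> x = 0.

Definition essential (L : R -> Prop) : Prop :=
  left_ideal L /\
  forall J, left_ideal J -> nonzero_set J -> exists x, [/\ L x, J x & x != 0].

Definition semisimple : Prop :=
  forall L, left_ideal L -> exists L', [/\ left_ideal L',
      (forall x, L x -> L' x -> x = 0) & forall r, exists a b, [/\ L a, L' b & r = a + b]].
End RingDefs.

From HB Require Import structures.
From mathcomp Require Import all_boot all_algebra boolp.
From mathcomp Require classical_sets.
Set Implicit Arguments. Unset Strict Implicit. Unset Printing Implicit Defensive.
Import GRing.Theory.
Local Open Scope ring_scope.

(* Condition (5) is the hub. Goldie's construction gives (4) => (5): in an
   essential left ideal [L] of a semiprime ring with ACC on left annihilators,
   pick elements [a_0, a_1, ...] of [L] with [lann a_i = lann a_i^2] and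
   [a_i a_j = 0] for [j < i]; finite rank stops the sequence, and its sum is
   regular because [R] is nonsingular. Conversely, if (4) fails one builds an
   infinite direct sum of left ideals, a strictly ascending annihilator chain or
   a nilpotent ideal, each contradicting (5). Under (5) the regular elements
   form a left Ore set; the Ore localisation is semisimple, since a complement
   of the contraction of a left ideal of [Q] extends to a complement in [Q].
   Semisimplicity of a left quotient makes every left-regular element a unit,
   which gives back the Ore condition and identifies [S_0(R)] with [C_R]. *)

Section RegularElements.
Variable R : nzRingType.
Implicit Types x y s a b : R.

Lemma regular1 : regular (1 : R).
Proof. by split=> y; rewrite ?mul1r ?mulr1. Qed.

Lemma regularM x y : regular x -> regular y -> regular (x * y).
Proof.
move=> [x1 x2] [y1 y2]; split=> z; first by rewrite -mulrA => /x1 /y1.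
by rewrite mulrA => /y2 /x2.
Qed.

Lemma regular_neq0 x : regular x -> x != 0.
Proof.
move=> [_ x2]; apply: contra_neq (oner_neq0 R) => x0.
by apply: x2; rewrite x0 mulr0.
Qed.

Lemma regular_mult_closed : mult_closed (@regular R).
Proof.
split; [exact: regular1 | by move/regular_neq0; rewrite eqxx | exact: regularM].
Qed.

Lemma regular_mulIf s a b : regular s -> a * s = b * s -> a = b.
Proof.
by move=> [_ s2] e; apply/eqP; rewrite -subr_eq0; apply/eqP/s2; rewrite mulrBl e subrr.
Qed.

Lemma regular_mulfI s a b : regular s -> s * a = s * b -> a = b.
Proof.
by move=> [s1 _] e; apply/eqP; rewrite -subr_eq0; apply/eqP/s1; rewrite mulrBr e subrr.
Qed.

Lemma S0_regular x : S0 x -> regular x.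
Proof. by case=> T [_ sub Tx]; exact: sub. Qed.

(* Under the Ore condition C_R is itself a left denominator set, hence the largest one. *)
Lemma S0_eq_regular : left_ore (@regular R) -> forall x, S0 x <-> regular x.
Proof.
move=> ore x; split=> [|rx]; first exact: S0_regular.
exists (@regular R); split=> //; split=> // r s [_ s2] /s2 ->.
by exists 1; rewrite mul1r; split=> //; exact: regular1.
Qed.

End RegularElements.

Section LeftQuotients.
Variables (R Q : nzRingType) (f : {rmorphism R -> Q}).

Lemma is_left_quotient_ext (S S' : R -> Prop) :
  (forall x, S x <-> S' x) -> is_left_quotient S f -> is_left_quotient S' f.
Proof.
move=> e [hu hq hk]; split=> [s /e /hu //|q|r].
  by have [s [r [/e Ss E]]] := hq q; exists s, r.
rewrite hk; split=> -[s [Ss E]]; exists s; split=> //; exact/e.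
Qed.

Lemma left_quotient_inj (S : R -> Prop) r :
  subsetR S (@regular R) -> is_left_quotient S f -> f r = 0 -> r = 0.
Proof. by move=> SR [_ _ hk] /hk [s [/SR [s1 _] /s1]]. Qed.

Lemma left_quotient_cancel (S : R -> Prop) s q :
  is_left_quotient S f -> S s -> f s * q = 0 -> q = 0.
Proof.
move=> [hu _ _] /hu [u [u1 _]] e.
by rewrite -(mul1r q) -u1 -mulrA e mulr0.
Qed.

End LeftQuotients.

Section LeftIdeals.
Variable R : nzRingType.
Implicit Types (L J K : R -> Prop) (x y b : R).

Lemma left_ideal0 L : left_ideal L -> L 0. Proof. by case. Qed.

Lemma left_idealD L x y : left_ideal L -> L x -> L y -> L (x + y).
Proof. by case=> _ + _; apply. Qed.

Lemma left_idealM L r x : left_ideal L -> L x -> L (r * x).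
Proof. by case=> _ _; apply. Qed.

Lemma left_idealN L x : left_ideal L -> L x -> L (- x).
Proof. by move=> hL Lx; rewrite -mulN1r; apply: left_idealM. Qed.

Lemma left_idealB L x y : left_ideal L -> L x -> L y -> L (x - y).
Proof. by move=> hL Lx Ly; apply: left_idealD => //; apply: left_idealN. Qed.

Lemma left_ideal_sum L n (F : nat -> R) : left_ideal L ->
  (forall i, (i < n)%N -> L (F i)) -> L (\sum_(i < n) F i).
Proof.
move=> hL; elim: n => [|n IH] h; first by rewrite big_ord0; apply: left_ideal0.
rewrite big_ord_recr /=; apply: left_idealD => //; last exact: h.
by apply: IH => i lt; apply: h; apply: ltnW.
Qed.

Lemma left_idealI L K : left_ideal L -> left_ideal K -> left_ideal (fun x => L x /\ K x).
Proof.
move=> hL hK; split=> [|x y [Lx Kx] [Ly Ky]|r x [Lx Kx]].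
- by split; apply: left_ideal0.
- by split; apply: left_idealD.
- by split; apply: left_idealM.
Qed.

Lemma left_ideal_lann (X : R -> Prop) : left_ideal (lann X).
Proof.
split=> [x _|a b ha hb x Xx|r a ha x Xx]; first by rewrite mul0r.
  by rewrite mulrDl ha // hb // addr0.
by rewrite -mulrA ha // mulr0.
Qed.

Lemma left_ideal_of_lann (P X : R -> Prop) :
  (forall r, P r <-> lann X r) -> left_ideal P.
Proof.
move=> e; have [h0 hD hM] := left_ideal_lann X.
split=> [|x y /e Px /e Py|r x /e Px]; apply/e; [exact: h0 | exact: hD | exact: hM].
Qed.

Definition lann1 b r := r * b = 0.

Lemma lann1_lann b r : lann1 b r <-> lann (eq^~ b) r.
Proof. by split=> [h _ ->|]; [exact: h | apply]. Qed.

Lemma left_ideal_lann1 b : left_ideal (lann1 b).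
Proof. exact: left_ideal_of_lann (lann1_lann b). Qed.

Definition principal b w := exists r, w = r * b.

Lemma left_ideal_principal b : left_ideal (principal b).
Proof.
split=> [|_ _ [r ->] [t ->]|t _ [r ->]]; first by exists 0; rewrite mul0r.
  by exists (r + t); rewrite mulrDl.
by exists (t * r); rewrite mulrA.
Qed.

Lemma principal_id b : principal b b.
Proof. by exists 1; rewrite mul1r. Qed.

Definition rmul_set J b w := exists y, J y /\ w = y * b.

Lemma left_ideal_rmul J b : left_ideal J -> left_ideal (rmul_set J b).
Proof.
move=> hJ; split=> [|_ _ [y [Jy ->]] [z [Jz ->]]|r _ [y [Jy ->]]].
- by exists 0; rewrite mul0r; split=> //; apply: left_ideal0.
- by exists (y + z); rewrite mulrDl; split=> //; apply: left_idealD.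
- by exists (r * y); rewrite mulrA; split=> //; apply: left_idealM.
Qed.

Definition lsum L K x := exists l k, [/\ L l, K k & x = l + k].

Lemma left_ideal_lsum L K : left_ideal L -> left_ideal K -> left_ideal (lsum L K).
Proof.
move=> hL hK; split.
- by exists 0, 0; rewrite addr0; split=> //; apply: left_ideal0.
- move=> _ _ [l1 [k1 [L1 K1 ->]]] [l2 [k2 [L2 K2 ->]]].
  by exists (l1 + l2), (k1 + k2); rewrite addrACA; split=> //; apply: left_idealD.
- move=> r _ [l [k [Ll Kk ->]]].
  by exists (r * l), (r * k); rewrite mulrDr; split=> //; apply: left_idealM.
Qed.

Definition essential_in B L :=
  forall J, left_ideal J -> subsetR J B -> nonzero_set J ->
    exists x, [/\ L x, J x & x != 0].

Lemma essential_inT L : essential L -> forall B, essential_in B L.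
Proof. by move=> [_ ess] B J hJ _; apply: ess. Qed.

Lemma essentialS L L' : essential L -> left_ideal L' -> subsetR L L' -> essential L'.
Proof.
move=> [_ ess] hL' sub; split=> // J hJ /(ess J hJ) [x [Lx Jx x0]].
by exists x; split=> //; apply: sub.
Qed.

(* If [J b = 0], [J] lies in the preimage; otherwise [J b] is a nonzero left
   ideal inside [R b]. *)
Lemma left_ideal_rpreim L b : left_ideal L -> left_ideal (fun r => L (r * b)).
Proof.
move=> hL; split=> [|x y Lx Ly|r x Lx]; rewrite ?mul0r ?mulrDl -?mulrA.
- exact: left_ideal0.
- exact: left_idealD.
- exact: (left_idealM r hL).
Qed.

Lemma essential_rpreim L b : left_ideal L -> essential_in (principal b) L ->
  essential (fun r => L (r * b)).
Proof.
move=> hL ess; split=> [|J hJ [j [Jj j0]]]; first exact: left_ideal_rpreim.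
case: (pselect (forall x, J x -> x * b = 0)) => [Jb0|].
  by exists j; split=> //; rewrite Jb0 //; apply: left_ideal0.
move=> /existsNP [x /not_implyP [Jx xb0]].
have Jb_sub : subsetR (rmul_set J b) (principal b) by move=> _ [y [_ ->]]; exists y.
have [w [Lw [y [Jy ew]] w0]] := ess _ (left_ideal_rmul b hJ) Jb_sub
  (ex_intro _ (x * b) (conj (ex_intro _ x (conj Jx erefl)) (introN eqP xb0))).
exists y; split=> //; first by rewrite -ew.
by apply: contra_neq w0 => y0; rewrite ew y0 mul0r.
Qed.

End LeftIdeals.

Lemma left_ideal_preim (R Q : nzRingType) (f : {rmorphism R -> Q}) (M : Q -> Prop) :
  left_ideal M -> left_ideal (fun r => M (f r)).
Proof.
move=> hM; split=> [|x y Mx My|r x Mx]; rewrite ?rmorph0 ?rmorphD ?rmorphM.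
- exact: left_ideal0.
- exact: left_idealD.
- exact: (left_idealM (f r) hM).
Qed.


Section Complements.
Variable R : nzRingType.
Implicit Types L K J : R -> Prop.

(* Zorn is applied to sets closed under the ideal operations but not required to
   contain [0], so that the union of the empty chain qualifies. *)
Lemma exists_maximal_disjoint_ideal L : exists K,
  [/\ left_ideal K, forall x, L x -> K x -> x = 0 &
      forall K', left_ideal K' -> subsetR K K' -> (forall x, L x -> K' x -> x = 0) ->
      subsetR K' K].
Proof.
pose P (K : classical_sets.set R) := [/\ forall x y, K x -> K y -> K (x + y),
   forall r x, K x -> K (r * x) & forall x, K x -> L x -> x = 0].
have [M [[MD MM ML] Mmax]] : exists M, P M /\ forall B, classical_sets.proper M B -> ~ P B.
  apply: classical_sets.Zorn_bigcup => F FP Ftot; split.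
  - move=> x y [X FX Xx] [Y FY Yy].
    have [XY|YX] := Ftot _ _ FX FY.
      by exists Y => //; have [+ _ _] := FP _ FY; apply; [apply: XY|].
    by exists X => //; have [+ _ _] := FP _ FX; apply; [|apply: YX].
  - by move=> r x [X FX Xx]; exists X => //; have [_ + _] := FP _ FX; apply.
  - by move=> x [X FX Xx]; have [_ _] := FP _ FX; apply.
exists (fun x => x = 0 \/ M x); split.
- split=> [|x y|r x]; first by left.
    by move=> [->|Mx] [->|My]; rewrite ?addr0 ?add0r; [left | right.. | right; apply: MD].
  by case=> [->|Mx]; [left; rewrite mulr0 | right; apply: MM].
- by move=> x Lx [//|Mx]; apply: ML.
move=> K' hK' MK' LK'0 x K'x; right; apply: contrapT => Mx.
apply: (Mmax K'); last by split=> [||y /LK'0 //]; case: hK'.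
by split=> [y My|/(_ x K'x)]; [apply: MK'; right | apply: Mx].
Qed.

Lemma exists_essential_complement L : left_ideal L ->
  exists K, [/\ left_ideal K, (forall x, L x -> K x -> x = 0) & essential (lsum L K)].
Proof.
move=> hL; have [K [hK LK0 Kmax]] := exists_maximal_disjoint_ideal L.
exists K; split=> //; split=> [|J hJ [j [Jj j0]]]; first exact: left_ideal_lsum.
apply: contrapT => hno.
have LKJ0 x : lsum L K x -> J x -> x = 0.
  by move=> h1 h2; apply: contrapT => /eqP x0; apply: hno; exists x.
have /(Kmax _ (left_ideal_lsum hK hJ)) KJ : subsetR K (lsum K J).
  by move=> k Kk; exists k, 0; rewrite addr0; split=> //; apply: left_ideal0.
have KJK : subsetR (lsum K J) K.
  apply: KJ => x Lx [k [l [Kk Jl ekl]]]; rewrite ekl in Lx *.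
  have l0 : l = 0.
    apply: LKJ0 => //; exists (k + l), (- k).
    by rewrite addrAC subrr add0r; split=> //; apply: left_idealN.
  by move: Lx; rewrite l0 addr0 => /LK0; apply.
have Kj : K j by apply: KJK; exists 0, j; rewrite add0r; split=> //; apply: left_ideal0.
apply/(negP j0)/eqP/LKJ0 => //.
by exists 0, j; rewrite add0r; split=> //; apply: left_ideal0.
Qed.

End Complements.

Section FiniteLeftRank.
Variable R : nzRingType.
Implicit Types (I B : nat -> R -> Prop) (L J : R -> Prop) (x y z : R).

Definition independent I := forall n (x : nat -> R),
  (forall i, (i <= n)%N -> I i (x i)) -> \sum_(i < n.+1) x i = 0 ->
  forall i, (i <= n)%N -> x i = 0.

Lemma finite_left_rankP I : finite_left_rank R ->
  (forall n, left_ideal (I n)) -> (forall n, nonzero_set (I n)) -> ~ independent I.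
Proof. by move=> fr hI nzI indI; apply: fr; exists I. Qed.

Definition psum I n w := exists xs : nat -> R,
  (forall i, I i (xs i)) /\ w = \sum_(i < n.+1) xs i.

Definition dsum I w := exists n, psum I n w.

Lemma psum_mem I n z : (forall i, left_ideal (I i)) -> I n z -> psum I n z.
Proof.
move=> hI Iz; exists (fun i => if i == n then z else 0); split.
  by move=> i; case: eqP => [->|_] //; apply: left_ideal0.
by rewrite big_ord_recr /= eqxx big1 ?add0r // => i _; rewrite ltn_eqF.
Qed.

Lemma psum_mono I m n : (forall i, left_ideal (I i)) -> (m <= n)%N ->
  subsetR (psum I m) (psum I n).
Proof.
move=> hI /subnK <- _ [xs [hxs ->]].
exists (fun i => if (i <= m)%N then xs i else 0); split.
  by move=> i; case: ifP => _; [apply: hxs | apply: left_ideal0].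
elim: (n - m)%N => [|d IH].
  by apply: eq_bigr => i _; rewrite -ltnS ltn_ord.
by rewrite addSn [RHS]big_ord_recr /= -IH leqNgt ltnS leq_addl addr0.
Qed.

Lemma left_ideal_psum I n : (forall i, left_ideal (I i)) -> left_ideal (psum I n).
Proof.
move=> hI; split.
- by exists (fun _ => 0); rewrite big1 //; split=> // i; apply: left_ideal0.
- move=> _ _ [x [hx ->]] [y [hy ->]]; exists (fun i => x i + y i).
  by rewrite big_split; split=> // i; apply: left_idealD.
- move=> r _ [x [hx ->]]; exists (fun i => r * x i).
  by rewrite mulr_sumr; split=> // i; apply: left_idealM.
Qed.

Lemma left_ideal_dsum I : (forall i, left_ideal (I i)) -> left_ideal (dsum I).
Proof.
move=> hI; split=> [|x y [m Ix] [n Iy]|r x [n Ix]].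
- by exists 0%N; apply: left_ideal0; apply: left_ideal_psum.
- exists (maxn m n); apply: left_idealD; first exact: left_ideal_psum.
    by apply: psum_mono Ix => //; apply: leq_maxl.
  by apply: psum_mono Iy => //; apply: leq_maxr.
- by exists n; apply: left_idealM => //; apply: left_ideal_psum.
Qed.

Lemma psum_dsum I n : subsetR (psum I n) (dsum I).
Proof. by move=> x Ix; exists n. Qed.

Lemma independent_psum_eq0 I n z : (forall i, left_ideal (I i)) -> independent I ->
  I n.+1 z -> psum I n z -> z = 0.
Proof.
move=> hI indI Iz [xs [hxs ez]].
have := indI n.+1 (fun i => if (i <= n)%N then - xs i else z).
move/(_ _ _ n.+1 (leqnn _)); rewrite ltnn; apply.
  move=> i; rewrite leq_eqVlt ltnS; case: ifP => [_ _|_ /orP [/eqP ->//|//]].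
  exact: left_idealN.
rewrite big_ord_recr /= ltnn.
under eq_bigr => i _ do rewrite -ltnS ltn_ord.
by rewrite sumrN -ez addNr.
Qed.

Lemma chain_mono B m n : (forall n, subsetR (B n) (B n.+1)) -> (m <= n)%N ->
  subsetR (B m) (B n).
Proof.
move=> BS /subnK <-; elim: (n - m)%N => [|d IH] x //.
by move=> /IH; rewrite addSn; apply: BS.
Qed.

Lemma independent_of_chain B I : (forall n, left_ideal (B n)) ->
  (forall n, subsetR (B n) (B n.+1)) -> (forall n, subsetR (I n) (B n.+1)) ->
  (forall n x, B n x -> I n x -> x = 0) -> independent I.
Proof.
move=> hB BS IB BI0; elim=> [|n IH] x hx.
  by rewrite big_ord_recl big_ord0 addr0 => e [|i].
rewrite big_ord_recr /= => e.
have last0 : x n.+1 = 0.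
  apply: (BI0 n.+1); last exact: hx.
  have -> : x n.+1 = - \sum_(i < n.+1) x i by apply/eqP; rewrite -addr_eq0 addrC e.
  apply/(left_idealN (hB _))/(left_ideal_sum (hB _)) => i hi.
  exact: (chain_mono BS hi (IB _ _ (hx _ (ltnW hi)))).
move: e; rewrite last0 addr0 => e i; rewrite leq_eqVlt ltnS => /orP [/eqP -> //|hi].
by apply: IH => // j hj; apply/hx/leqW.
Qed.

Lemma expr_lreg x : (forall y, y * x = 0 -> y = 0) ->
  forall n y, y * x ^+ n = 0 -> y = 0.
Proof.
move=> lx; elim=> [|n IH] y; first by rewrite expr0 mulr1.
by rewrite exprSr mulrA => /lx /IH.
Qed.

Lemma sum_mul_expr_eq0 x J : left_ideal J -> (forall y, y * x = 0 -> y = 0) ->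
  (forall w, J w -> principal x w -> w = 0) ->
  forall n (j : nat -> R), (forall i, (i <= n)%N -> J (j i)) ->
  \sum_(i < n.+1) j i * x ^+ i = 0 -> forall i, (i <= n)%N -> j i = 0.
Proof.
move=> hJ lx Jx0; elim=> [|n IH] j hj.
  by rewrite big_ord_recl big_ord0 expr0 mulr1 addr0 => j0 [|i].
rewrite big_ord_recl expr0 mulr1.
under eq_bigr do rewrite exprSr mulrA.
rewrite -mulr_suml => e.
have j0 : j 0%N = 0.
  apply: Jx0; first exact: hj.
  by exists (- \sum_(i < n.+1) j i.+1 * x ^+ i); rewrite mulNr; apply/eqP;
     rewrite -addr_eq0 e.
move: e; rewrite j0 add0r => /lx /(IH (fun i => j i.+1) (fun i => hj i.+1)) e.
by move=> [|i] //= /e.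
Qed.

(* The left ideals [J x^n] form a direct sum when [J] meets [R x] trivially. *)
Lemma principal_essential x : finite_left_rank R ->
  (forall y, y * x = 0 -> y = 0) -> essential (principal x).
Proof.
move=> fr lx; split=> [|J hJ [z [Jz z0]]]; first exact: left_ideal_principal.
apply: contrapT => hno.
have Jx0 w : J w -> principal x w -> w = 0.
  by move=> Jw xw; apply: contrapT => /eqP w0; apply: hno; exists w.
apply: (@finite_left_rankP (fun n => rmul_set J (x ^+ n)) fr).
- by move=> n; apply: left_ideal_rmul.
- move=> n; exists (z * x ^+ n); split; first by exists z.
  by apply: contra_neq z0 => /(expr_lreg lx).
move=> n xs hxs e.
have [j hj] : exists j : nat -> R, forall i, (i <= n)%N -> J (j i) /\ xs i = j i * x ^+ i.
  have /choice [j hj] : forall i, exists a, (i <= n)%N -> J a /\ xs i = a * x ^+ i.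
    move=> i; case: (leqP i n) => hi; last by exists 0.
    by have [a [Ja ->]] := hxs i hi; exists a.
  by exists j.
have e' : \sum_(i < n.+1) j i * x ^+ i = 0.
  by apply: etrans e; apply: eq_bigr => i _; rewrite (proj2 (hj i _)) // -ltnS.
move=> i hi; rewrite (proj2 (hj i hi)).
by rewrite (sum_mul_expr_eq0 hJ lx Jx0 (fun i h => proj1 (hj i h)) e' hi) mul0r.
Qed.

End FiniteLeftRank.

Lemma semisimple_finite_left_rank (R : nzRingType) :
  semisimple R -> finite_left_rank R.
Proof.
move=> ss [I [hI indI]].
have hIl n : left_ideal (I n) by case: (hI n).
have [V [hV UV UVsum]] := ss _ (left_ideal_dsum hIl).
have [u [v [[n Un] Vv e1]]] := UVsum 1.
have [_ [z [Iz z0]]] := hI n.+1.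
apply/(negP z0)/eqP/(independent_psum_eq0 hIl indI Iz).
have zv0 : z * v = 0.
  apply: UV; last exact: left_idealM.
  have -> : z * v = z - z * u by rewrite -{2}(mulr1 z) e1 mulrDr addrC addKr.
  apply: left_idealB; first exact: left_ideal_dsum.
    exact: psum_dsum (psum_mem hIl Iz).
  by apply: (left_idealM z (left_ideal_dsum hIl)); exists n.
have -> : z = z * u by rewrite -{1}(mulr1 z) e1 mulrDr zv0 addr0.
exact: (left_idealM z (left_ideal_psum n hIl)).
Qed.

Lemma semisimple_lreg_unit (Q : nzRingType) (x : Q) : semisimple Q ->
  (forall y, y * x = 0 -> y = 0) -> exists u, u * x = 1 /\ x * u = 1.
Proof.
move=> ss lx; have [K [hK dis xKsum]] := ss _ (left_ideal_principal x).
have K0 z : K z -> z = 0.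
  move=> Kz; apply: contrapT => /eqP z0.
  have [_ ess] := principal_essential (semisimple_finite_left_rank ss) lx.
  have [w [xw Kw /eqP]] := ess K hK (ex_intro _ z (conj Kz z0)).
  by apply; apply: dis.
have [_ [_ [[y ->] /K0 -> e]]] := xKsum 1.
rewrite addr0 in e; exists y; split=> //.
apply/eqP; rewrite -subr_eq0; apply/eqP/lx.
by rewrite mulrBl -mulrA -e mulr1 mul1r subrr.
Qed.

Section AnnihilatorChains.
Variable R : nzRingType.
Hypothesis acc : acc_left_annihilators R.
Implicit Types (P : R -> Prop) (a b x y : R).

Lemma acc_lann1_max P a0 : P a0 -> exists a, P a /\
  forall b, P b -> subsetR (lann1 a) (lann1 b) -> subsetR (lann1 b) (lann1 a).
Proof.
move=> Pa0; apply: contrapT => hno.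
have /choice [g hg] : forall a, exists b,
    P a -> [/\ P b, subsetR (lann1 a) (lann1 b) & ~ subsetR (lann1 b) (lann1 a)].
  move=> a; case: (pselect (P a)) => Pa; last by exists a.
  apply: contrapT => h; apply: hno; exists a; split=> // b Pb sab.
  by apply: contrapT => h2; apply: h; exists b.
pose s n := iter n g a0.
have Ps n : P (s n) by elim: n => [|n IH] //=; have [] := hg _ IH.
have [N hN] := acc (A := fun n => lann1 (s n)) (fun n => ex_intro _ _ (lann1_lann (s n)))
  (fun n => let: And3 _ h _ := hg _ (Ps n) in h).
by have [_ _] := hg _ (Ps N); apply; exact: (hN N.+1 (leqnSn N)).
Qed.

Lemma lann_expr_stable x : exists N, forall n, (N <= n)%N ->
  forall y, y * x ^+ n * x ^+ n = 0 -> y * x ^+ n = 0.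
Proof.
have lannS n : subsetR (lann1 (x ^+ n)) (lann1 (x ^+ n.+1)).
  by move=> y; rewrite /lann1 exprSr mulrA => ->; rewrite mul0r.
have [N hN] := acc (A := fun n => lann1 (x ^+ n))
  (fun n => ex_intro _ _ (lann1_lann (x ^+ n))) lannS.
exists N => n hn y e; apply: (chain_mono lannS hn).
by apply: (hN (n + n)%N); [rewrite (leq_trans hn) ?leq_addr | rewrite /lann1 exprD mulrA].
Qed.

End AnnihilatorChains.

(* The two-sided ideal generated by [a] is nilpotent of index 2. *)
Lemma semiprime_aRa_eq0 (R : nzRingType) (a : R) : semiprime R ->
  (forall r, a * r * a = 0) -> a = 0.
Proof.
move=> sp aRa.
pose I (w : R) := exists s : seq (R * R), w = \sum_(p <- s) p.1 * a * p.2.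
have hI : two_sided_ideal I.
  split; first split.
  - by exists [::]; rewrite big_nil.
  - by move=> _ _ [s1 ->] [s2 ->]; exists (s1 ++ s2); rewrite big_cat.
  - move=> r _ [s ->]; exists [seq (r * p.1, p.2) | p <- s].
    by rewrite big_map mulr_sumr; apply: eq_bigr => p _ /=; rewrite !mulrA.
  - move=> _ r [s ->]; exists [seq (p.1, p.2 * r) | p <- s].
    by rewrite big_map mulr_suml; apply: eq_bigr => p _ /=; rewrite !mulrA.
apply: (sp I hI 1%N); last by exists [:: (1, 1)]; rewrite big_seq1 mul1r mulr1.
case=> [|u [|v [|]]] //= _ hs; rewrite big_cons big_seq1.
have [s1 ->] := hs u (mem_head _ _).
have [s2 ->] : I v by apply: hs; rewrite !inE eqxx orbT.
rewrite mulr_suml big1 // => p _; rewrite mulr_sumr big1 // => q _.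
have -> : p.1 * a * p.2 * (q.1 * a * q.2) = p.1 * (a * (p.2 * q.1) * a) * q.2.
  by rewrite !mulrA.
by rewrite aRa mulr0 mul0r.
Qed.

Section SemiprimeAcc.
Variable R : nzRingType.
Hypotheses (acc : acc_left_annihilators R) (sp : semiprime R).
Implicit Types (K : R -> Prop) (a x y : R).

(* Take [a] in [K] with maximal annihilator; every [r a] is nilpotent, and
   walking down the powers of [r a] shows [a r a = 0]. *)
Lemma exists_non_nilpotent K : left_ideal K -> nonzero_set K ->
  exists x, K x /\ forall n, x ^+ n != 0.
Proof.
move=> hK [x0 [Kx0 x00]]; apply: contrapT => hno.
have nil x : K x -> exists n, x ^+ n = 0.
  move=> Kx; apply: contrapT => h; apply: hno; exists x; split=> // n.
  by apply/eqP => e; apply: h; exists n.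
have [a [[Ka a0] amax]] := acc_lann1_max acc (P := fun a => K a /\ a != 0) (conj Kx0 x00).
apply/(negP a0)/eqP/(semiprime_aRa_eq0 sp) => r.
pose b m := a * (r * a) ^+ m.
have step m : b m.+2 = 0 -> b m.+1 = 0.
  move=> bm2; apply: contrapT => bm1.
  have Kb : K (b m.+1) by rewrite /b exprSr !mulrA; apply: left_idealM.
  have lannS : subsetR (lann1 a) (lann1 (b m.+1)).
    by move=> t; rewrite /lann1 /b mulrA => ->; rewrite mul0r.
  have /(amax _ (conj Kb (introN eqP bm1)) lannS (a * r)) : lann1 (b m.+1) (a * r).
    by rewrite /lann1 -bm2 /b [in RHS]exprS !mulrA.
  by rewrite /lann1 => ara; apply: bm1; rewrite /b exprS !mulrA ara mul0r.
have down d m : b (m + d).+1 = 0 -> b m.+1 = 0.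
  by elim: d m => [|d IH] m; rewrite ?addn0 // addnS => /step /IH.
have [k rak] := nil (r * a) (left_idealM r hK Ka).
by have := down k 0%N; rewrite add0n /b exprSr rak mul0r mulr0 expr1 mulrA; apply.
Qed.

Lemma lann1_essential_eq0 y : essential (lann1 y) -> y = 0.
Proof.
move=> ey; apply: contrapT => /eqP y0.
have [z [[ez z0] zmax]] := acc_lann1_max acc
  (P := fun z => essential (lann1 z) /\ z != 0) (conj ey y0).
apply/(negP z0)/eqP/(semiprime_aRa_eq0 sp) => a; apply: contrapT => /eqP zaz0.
have nz : nonzero_set (principal (z * a)).
  by exists (z * a); split; [exact: principal_id | apply: contra_neq zaz0 => ->; rewrite mul0r].
have [w [lw [r ew] w0]] := (proj2 ez) _ (left_ideal_principal (z * a)) nz.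
have lannS : subsetR (lann1 z) (lann1 (z * a * z)).
  by move=> t; rewrite /lann1 !mulrA => ->; rewrite !mul0r.
have ess2 := essentialS ez (left_ideal_lann1 _) lannS.
have /(zmax _ (conj ess2 zaz0) lannS r) rz : lann1 (z * a * z) r.
  by move: lw; rewrite /lann1 ew !mulrA.
by apply/(negP w0)/eqP; rewrite ew mulrA rz mul0r.
Qed.

End SemiprimeAcc.

Lemma dependent_choice_seq (T : Type) (x0 : T) (Q : nat -> (nat -> T) -> T -> Prop) :
  (forall k a a' b, (forall i, (i < k)%N -> a i = a' i) -> Q k a b -> Q k a' b) ->
  (forall k a, exists b, Q k a b) -> exists a : nat -> T, forall k, Q k a (a k).
Proof.
move=> Qext Qtot.
have /choice [h hh] : forall p : nat * (nat -> T), exists b, Q p.1 p.2 b.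
  by move=> [k a]; apply: Qtot.
pose pre := fix pre (n : nat) : seq T :=
  if n is n'.+1 then rcons (pre n') (h (n', nth x0 (pre n'))) else [::].
have size_pre n : size (pre n) = n by elim: n => //= n IH; rewrite size_rcons IH.
pose a i := nth x0 (pre i.+1) i.
have a_last n : a n = h (n, nth x0 (pre n)).
  by rewrite /a /= nth_rcons size_pre ltnn eqxx.
have nth_pre n i : (i < n)%N -> nth x0 (pre n) i = a i.
  elim: n => // n IH; rewrite ltnS /= nth_rcons size_pre.
  by case: ltngtP => // [/IH-> //|-> _]; rewrite a_last.
exists a => k; apply: (Qext _ (nth x0 (pre k))); first exact: nth_pre.
by rewrite a_last; apply: (hh (k, _)).
Qed.

Lemma choice_factor (R : nzRingType) n (P : nat -> R -> Prop) (b xs : nat -> R) :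
  (forall i, (i <= n)%N -> exists y, P i y /\ xs i = y * b i) ->
  exists ys, forall i, (i <= n)%N -> P i (ys i) /\ xs i = ys i * b i.
Proof.
move=> hxs; have /choice [ys hys] : forall i, exists y, (i <= n)%N -> P i y /\ xs i = y * b i.
  by move=> i; case: (leqP i n) => [/hxs [y hy]|_]; [exists y | exists 0].
by exists ys.
Qed.

Section Goldie.
Variable R : nzRingType.
Implicit Types (L : R -> Prop) (a : nat -> R) (b x y : R).

(* Goldie's regular element is the sum of a maximal admissible sequence; the
   third condition says [lann b = lann b^2]. *)
Definition admissible L a k b :=
  [/\ L b, b != 0, forall y, y * b * b = 0 -> y * b = 0 &
      forall j, (j < k)%N -> b * a j = 0].

Definition admissible_seq L k a := forall i, (i < k)%N -> admissible L a i (a i).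

Lemma admissible_ext L k a a' b : (forall i, (i < k)%N -> a i = a' i) ->
  admissible L a k b -> admissible L a' k b.
Proof. by move=> e [Lb b0 hb ha]; split=> // j jk; rewrite -e ?ha. Qed.

Lemma admissible_seq_ext L k a a' : (forall i, (i < k)%N -> a i = a' i) ->
  admissible_seq L k a -> admissible_seq L k a'.
Proof.
move=> e ga i ik; rewrite -e //; apply: admissible_ext (ga i ik) => j ji.
by apply: e; apply: ltn_trans ik.
Qed.

(* Multiplying on the right by [a m] kills the later terms and, by induction,
   the earlier ones, leaving [xs m * a m * a m]. *)
Lemma admissible_seq_indep L k a : admissible_seq L k a -> forall xs : nat -> R,
  \sum_(0 <= i < k) xs i * a i = 0 -> forall i, (i < k)%N -> xs i * a i = 0.
Proof.
move=> ga xs e.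
suff low m : (m <= k)%N -> forall i, (i < m)%N -> xs i * a i = 0 by apply: low.
elim: m => [//|m IH] mk i; rewrite ltnS leq_eqVlt => /orP [/eqP {i}->|]; last exact/IH/ltnW.
have [_ _ ham _] := ga m mk; apply: ham.
have := congr1 (fun t => t * a m) e; rewrite mul0r mulr_suml.
rewrite (big_cat_nat (leq0n m) (ltnW mk)) (big_ltn mk) /=.
rewrite big_nat_cond big1 => [|j /andP [/andP [_ jm] _]]; last by rewrite IH ?mul0r // ltnW.
rewrite add0r [X in _ + X]big_nat_cond big1 ?addr0 // => j /andP [/andP [mj jk] _].
by have [_ _ _ ajm] := ga j jk; rewrite -mulrA ajm ?mulr0.
Qed.

Hypotheses (fr : finite_left_rank R) (acc : acc_left_annihilators R) (sp : semiprime R).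

Lemma admissible_seq_maximal L :
  exists k a, admissible_seq L k a /\ ~ exists b, admissible L a k b.
Proof.
apply: contrapT => hno.
have [a ha] : exists a, forall k, admissible_seq L k a -> admissible L a k (a k).
  apply: (@dependent_choice_seq _ 0
    (fun k a b => admissible_seq L k a -> admissible L a k b)) => [k a a' b e hab ga'|k a].
    have e' i : (i < k)%N -> a' i = a i by move/e.
    exact/(admissible_ext e)/hab/(admissible_seq_ext e').
  case: (pselect (admissible_seq L k a)) => [ga|]; last by exists 0.
  apply: contrapT => nob; apply: hno; exists k, a; split=> // [[b hb]].
  by apply: nob; exists b.
have ga k : admissible_seq L k a.
  elim: k => [|k IH] i //; rewrite ltnS leq_eqVlt => /orP [/eqP ->|/IH //].
  exact: ha.
apply: (@finite_left_rankP _ (fun i => principal (a i)) fr).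
- by move=> n; apply: left_ideal_principal.
- move=> n; have [_ an0 _ _] := ga n.+1 n (ltnSn n).
  by exists (a n); split=> //; exact: principal_id.
move=> n xs hxs e.
have [ys hys] := @choice_factor _ n (fun _ _ => True) a xs
  (fun i hi => let: ex_intro r er := hxs i hi in ex_intro _ r (conj I er)).
have e' : \sum_(0 <= i < n.+1) ys i * a i = 0.
  by rewrite big_mkord; apply: etrans e; apply: eq_bigr => i _; rewrite (proj2 (hys i _)) // -ltnS.
by move=> i hi; rewrite (proj2 (hys i hi)); apply: (admissible_seq_indep (ga n.+1) e').
Qed.

Lemma maximal_admissible_lann L k a : left_ideal L ->
  ~ (exists b, admissible L a k b) ->
  forall x, L x -> (forall j, (j < k)%N -> x * a j = 0) -> x = 0.
Proof.
move=> hL stuck x0 Lx0 ax0; apply: contrapT => /eqP x00.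
pose A := fun x => exists2 j, (j < k)%N & x = a j.
have [|x [[Lx Ax] xn]] := exists_non_nilpotent acc sp (left_idealI hL (left_ideal_lann A)).
  by exists x0; split=> //; split=> // _ [j jk ->]; apply: ax0.
have [N hN] := lann_expr_stable acc x.
apply: stuck; exists (x ^+ N.+1); split.
- by rewrite exprSr; apply: left_idealM.
- exact: xn.
- exact: hN.
- by move=> j jk; rewrite exprSr -mulrA Ax ?mulr0 //; exists j.
Qed.

Theorem essential_regular L : left_ideal L -> essential L -> exists c, regular c /\ L c.
Proof.
move=> hL essL; have [k [a [ga stuck]]] := admissible_seq_maximal L.
pose c := \sum_(0 <= i < k) a i.
have Lc : L c.
  by rewrite /c big_mkord; apply: (left_ideal_sum hL) => i ik; have [] := ga i ik.
have lc y : y * c = 0 -> y = 0.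
  rewrite /c mulr_sumr => /(admissible_seq_indep ga) ya; apply: contrapT => /eqP y0.
  pose A := fun x => exists2 j, (j < k)%N & x = a j.
  have [|x [Lx Ax /eqP]] := (proj2 essL) _ (left_ideal_lann A).
    by exists y; split=> // _ [j jk ->]; apply: ya.
  by apply; apply: (maximal_admissible_lann hL stuck Lx) => j jk; apply: Ax; exists j.
exists c; split=> //; split=> // z cz.
apply/(lann1_essential_eq0 acc sp)/(essentialS (principal_essential fr lc)).
  exact: left_ideal_lann1.
by move=> _ [r ->]; rewrite /lann1 -mulrA cz mulr0.
Qed.

End Goldie.

Lemma regular_essential (R : nzRingType) (L : R -> Prop) : finite_left_rank R ->
  left_ideal L -> (exists c, regular c /\ L c) -> essential L.
Proof.
move=> fr hL [c [[_ c2] Lc]]; apply: (essentialS (principal_essential fr c2) hL).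
by move=> _ [r ->]; apply: left_idealM.
Qed.

Definition essential_iff_regular (R : nzRingType) := forall L : R -> Prop,
  left_ideal L -> (essential L <-> exists x, regular x /\ L x).

Section EssentialIffRegular.
Variable R : nzRingType.
Hypothesis ereg : essential_iff_regular R.
Implicit Types (L K B P X : R -> Prop).

Lemma essential_iff_regular_finite_left_rank : finite_left_rank R.
Proof.
move=> [I [hI indI]].
have hIl i : left_ideal (I i) by case: (hI i).
have hU := left_ideal_dsum hIl.
have [K [hK UK0 essUK]] := exists_essential_complement hU.
have [c [rc [u [k [[n Un] Kk ec]]]]] := (ereg (left_ideal_lsum hU hK)).1 essUK.
have [_ essnK] : essential (lsum (psum I n) K).
  apply/(ereg (left_ideal_lsum (left_ideal_psum n hIl) hK)).
  by exists c; split=> //; exists u, k.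
have [x [[u' [k' [Un' Kk' ->]]] Ix x0]] := essnK _ (hIl n.+1) (hI n.+1).2.
have k'0 : k' = 0.
  apply: UK0 => //; have -> : k' = u' + k' - u' by rewrite addrAC subrr add0r.
  apply: left_idealB => //; first exact: psum_dsum (psum_mem hIl Ix).
  exact: psum_dsum Un'.
move: Ix x0; rewrite k'0 addr0 => Ix /eqP; apply.
exact: independent_psum_eq0 hIl indI Ix Un'.
Qed.

(* An annihilator ideal has no proper essential extension: for [b] in [B],
   [{r | r b in P}] is essential, so contains a regular [c], and [c b X = 0]
   forces [b X = 0]. *)
Lemma lann_essential_closed P X B : (forall r, P r <-> lann X r) ->
  left_ideal B -> subsetR P B -> essential_in B P -> subsetR B P.
Proof.
move=> eP hB PB ess b Bb; have hP := left_ideal_of_lann eP.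
have [|c [[c1 _] Pcb]] := (ereg (left_ideal_rpreim b hP)).1.
  apply: essential_rpreim => // J hJ Jb; apply: ess => // x /Jb [r ->].
  exact: left_idealM.
by apply/eP => z Xz; apply: c1; rewrite mulrA; exact: (eP _).1 Pcb z Xz.
Qed.

Lemma strict_subchain (A : nat -> R -> Prop) :
  (forall N, exists2 n, (N <= n)%N & ~ subsetR (A n) (A N)) ->
  exists Ns : nat -> nat, forall i, (Ns i <= Ns i.+1)%N /\ ~ subsetR (A (Ns i.+1)) (A (Ns i)).
Proof.
move=> hg; have /choice [g hgP] : forall N, exists n, (N <= n)%N /\ ~ subsetR (A n) (A N).
  by move=> N; have [n Nn nA] := hg N; exists n.
by exists (fun i => iter i g 0%N) => i; apply: hgP.
Qed.

(* A strictly ascending chain of annihilators yields, at each strict step,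
   a nonzero ideal meeting the previous annihilator trivially; these are independent. *)
Lemma essential_iff_regular_acc : acc_left_annihilators R.
Proof.
move=> A hA AS; apply: contrapT => hno.
have hAl n : left_ideal (A n) by have [X eX] := hA n; exact: left_ideal_of_lann eX.
have [|Ns hNs] := strict_subchain (A := A).
  move=> N; apply: contrapT => h; apply: hno; exists N => n hn.
  by apply: contrapT => nA; apply: h; exists n.
have hC i : exists C, [/\ left_ideal C, subsetR C (A (Ns i.+1)),
    nonzero_set C & forall x, A (Ns i) x -> C x -> x = 0].
  have [X eX] := hA (Ns i); have [Nsi nA] := hNs i.
  apply: contrapT => hneg; apply/nA/(lann_essential_closed eX (hAl _)).
    exact: chain_mono AS Nsi.
  move=> J hJ JA nzJ; apply: contrapT => hno2; apply: hneg; exists J; split=> //.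
  by move=> x Ax Jx; apply: contrapT => /eqP x0; apply: hno2; exists x.
have /choice [C hCP] := hC.
apply: (@finite_left_rankP _ C essential_iff_regular_finite_left_rank).
- by move=> n; have [] := hCP n.
- by move=> n; have [] := hCP n.
apply: (@independent_of_chain _ (fun i => A (Ns i))) => [n|n|n|n x].
- exact: hAl.
- exact: chain_mono AS (hNs n).1.
- by have [] := hCP n.
- by have [_ _ _] := hCP n; apply.
Qed.

(* The right annihilator of a nilpotent ideal is essential: otherwise one
   builds products of arbitrary length from [I] that stay nonzero. *)
Lemma essential_iff_regular_semiprime : semiprime R.
Proof.
move=> I [hI hIr] n nil.
pose rann x := forall y, I y -> y * x = 0.
have hrann : left_ideal rann.
  split=> [y _|a b ha hb y Iy|r a ha y Iy]; first by rewrite mulr0.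
    by rewrite mulrDr ha // hb // addr0.
  by rewrite mulrA ha //; apply: hIr.
have [|c [[_ c2] rc]] := (ereg hrann).1; last by move=> x Ix; apply/c2/rc.
split=> // J hJ [j [Jj j0]]; apply: contrapT => hno.
have long k : exists s : seq R, [/\ size s = k, forall x, x \in s -> I x &
    (\prod_(x <- s) x) * j != 0].
  elim: k => [|k [s [sz sI nz]]]; first by exists [::]; rewrite big_nil mul1r.
  have /existsNP [y /not_implyP [Iy hy]] : ~ rann ((\prod_(x <- s) x) * j).
    move=> hr; apply: hno; exists ((\prod_(x <- s) x) * j); split=> //.
    exact: left_idealM.
  exists (y :: s); split; first by rewrite /= sz.
    by move=> x; rewrite inE => /orP [/eqP ->|/sI].
  by rewrite big_cons -mulrA; apply/eqP.
have [s [sz sI]] := long n.+1.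
by rewrite nil // mul0r eqxx.
Qed.

Lemma essential_iff_regular_ore : left_ore (@regular R).
Proof.
split=> [|r c rc]; first exact: regular_mult_closed.
have essRc : essential (principal c).
  by apply/(ereg (left_ideal_principal c)); exists c; split=> //; exact: principal_id.
have [|s [rs [y e]]] := (ereg (left_ideal_rpreim r (left_ideal_principal c))).1.
  exact/essential_rpreim/essential_inT/essRc/left_ideal_principal.
by exists s, y; split.
Qed.

End EssentialIffRegular.

(* Over a semisimple left quotient every regular element becomes a unit, so
   the Ore condition for [C_R] can be read off in [Q]. *)
Lemma S0_semisimple_quotient (R Q : nzRingType) (f : {rmorphism R -> Q}) :
  is_left_quotient (@S0 R) f -> semisimple Q ->
  left_ore (@regular R) /\ is_left_quotient (@regular R) f.
Proof.
move=> hf ss; have [_ hq hk] := hf.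
have f_inj r : f r = 0 -> r = 0 := left_quotient_inj (@S0_regular R) hf.
have unitc c : regular c -> exists u, u * f c = 1 /\ f c * u = 1.
  move=> [_ c2]; apply: semisimple_lreg_unit => // q e.
  have [s [r [Ss esq]]] := hq q; apply: (left_quotient_cancel hf Ss).
  have /f_inj/c2 r0 : f (r * c) = 0 by rewrite rmorphM -esq -mulrA e mulr0.
  by rewrite esq r0 rmorph0.
split.
  split=> [|r c rc]; first exact: regular_mult_closed.
  have [u [u1 u2]] := unitc c rc; have [s [r' [Ss e]]] := hq (f r * u).
  exists s, r'; split; first exact: S0_regular.
  apply/eqP; rewrite -subr_eq0; apply/eqP/f_inj.
  by rewrite rmorphB !rmorphM -e -mulrA -(mulrA (f r)) u1 mulr1 subrr.
split=> [|q|r]; first exact: unitc.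
  by have [s [r [Ss e]]] := hq q; exists s, r; split=> //; exact: S0_regular.
split=> [/f_inj ->|[s [[s1 _] /s1 ->]]]; last by rewrite rmorph0.
by exists 1; rewrite mulr0; split=> //; exact: regular1.
Qed.

Definition frac_ideal (R Q : nzRingType) (f : {rmorphism R -> Q}) (L : R -> Prop) q :=
  exists s l, [/\ regular s, L l & f s * q = f l].

Section LeftOrders.
Variables (R Q : nzRingType) (f : {rmorphism R -> Q}).
Hypotheses (ore : left_ore (@regular R)) (hf : is_left_quotient (@regular R) f).
Implicit Types L K : R -> Prop.

Lemma left_ideal_frac L : left_ideal L -> left_ideal (frac_ideal f L).
Proof.
have [_ hq _] := hf; move=> hL; split.
- exists 1, 0; rewrite mulr0 rmorph0; split=> //; [exact: regular1 | exact: left_ideal0].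
- move=> q1 q2 [s1 [l1 [rs1 L1 e1]]] [s2 [l2 [rs2 L2 e2]]].
  have [a [b [ra e]]] := ore.2 s1 s2 rs2.
  exists (a * s1), (a * l1 + b * l2); split; first exact: regularM.
    by apply: (left_idealD hL); apply: (left_idealM _ hL).
  rewrite mulrDr {1}rmorphM -mulrA e1 e rmorphM -mulrA e2.
  by rewrite rmorphD !rmorphM.
- move=> p q [s [l [rs Ll e]]].
  have [u [r' [ru e']]] := hq p; have [w [r'' [rw e'']]] := ore.2 r' s rs.
  exists (w * u), (r'' * l); split; [exact: regularM | exact: (left_idealM _ hL) |].
  by rewrite rmorphM -mulrA (mulrA (f u)) e' mulrA -rmorphM e'' rmorphM -mulrA e rmorphM.
Qed.

Lemma ore_regular_essential L : left_ideal L ->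
  (exists x, regular x /\ L x) -> essential L.
Proof.
move=> hL [c [rc Lc]]; split=> // J hJ [j [Jj j0]].
have [s [r [[s1 _] e]]] := ore.2 j c rc.
exists (s * j); split; [by rewrite e; apply: left_idealM | exact: left_idealM |].
by apply: contra_neq j0 => /s1.
Qed.

(* If [L] is essential, the extension [Q L] has zero complement in [Q],
   hence contains [1]. *)
Lemma semisimple_essential_iff_regular : semisimple Q -> essential_iff_regular R.
Proof.
move=> ss L hL; split=> [essL|]; last exact: ore_regular_essential.
have [_ hq _] := hf.
have f_inj r : f r = 0 -> r = 0 := left_quotient_inj (fun _ => id) hf.
have [K [hK dis QLK]] := ss _ (left_ideal_frac hL).
have K0 k : K k -> k = 0.
  move=> Kk; apply: contrapT => /eqP k0; have [s [r [rs e]]] := hq k.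
  have [|x [Lx Kx /eqP]] := essL.2 _ (left_ideal_preim f hK).
    exists r; split; first by rewrite -e; apply: left_idealM.
    by apply: contra_neq k0 => r0; apply: (left_quotient_cancel hf rs); rewrite e r0 rmorph0.
  apply; apply/f_inj/dis => //.
  by exists 1, x; rewrite rmorph1 mul1r; split=> //; exact: regular1.
have [a [b [[s [l [rs Ll e]]] /K0 -> e1]]] := QLK 1.
rewrite addr0 in e1; rewrite -e1 mulr1 in e.
by exists l; split=> //; have -> : l = s by apply/eqP; rewrite -subr_eq0; apply/eqP/f_inj;
   rewrite rmorphB e subrr.
Qed.

(* A complement of the contraction [L] of a left ideal [M] of [Q] extends to a
   complement of [M]; essentiality of [L + K] supplies the regular element
   splitting [1]. *)
Lemma essential_iff_regular_semisimple : essential_iff_regular R -> semisimple Q.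
Proof.
move=> ereg M hM; have [hu _ _] := hf.
pose L r := M (f r); have hL : left_ideal L := left_ideal_preim f hM.
have [K [hK LK0 essLK]] := exists_essential_complement hL.
have [c [rc [l [k [Ll Kk ec]]]]] := (ereg _ (left_ideal_lsum hL hK)).1 essLK.
exists (frac_ideal f K); split; first exact: left_ideal_frac.
  move=> q Mq [s [k' [rs Kk' e]]].
  have k'0 : k' = 0 by apply: LK0 => //; rewrite /L -e; apply: left_idealM.
  by apply: (left_quotient_cancel hf rs); rewrite e k'0 rmorph0.
move=> q; have [u [u1 u2]] := hu c rc.
exists (q * u * f l), (q * u * f k); split; first exact: left_idealM.
  rewrite -mulrA; apply: (left_idealM _ (left_ideal_frac hK)).
  by exists c, k; rewrite mulrA u2 mul1r.
by rewrite -mulrDr -rmorphD -ec -mulrA u1 mulr1.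
Qed.

End LeftOrders.
Section OreFractions.
Variable R : nzRingType.
Hypothesis ore : left_ore (@regular R).
Implicit Types (s t r n a b c d u v : R) (p q : R * R).

(* A pair [(s, r)] with [s] regular stands for the left fraction [s^-1 r]. *)
Definition regden p := regular p.1.
Definition feq p q := forall u v, u * p.1 = v * q.1 -> u * p.2 = v * q.2.

Lemma feq_refl p : regden p -> feq p p.
Proof. by move=> rp u v /(regular_mulIf rp) ->. Qed.

Lemma feq_sym p q : feq p q -> feq q p.
Proof. by move=> h u v e; rewrite (h v u). Qed.

Lemma feq_trans q p p' : regden q -> feq p q -> feq q p' -> feq p p'.
Proof.
move=> rq h12 h23 u v e.
have [a [b [ra eab]]] := ore.2 (u * p.1) q.1 rq.
apply: (regular_mulfI ra); rewrite !mulrA.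
have e1 : a * u * p.1 = b * q.1 by rewrite -mulrA.
have e2 : b * q.1 = a * v * p'.1 by rewrite -eab e !mulrA.
by rewrite (h12 _ _ e1) (h23 _ _ e2).
Qed.

(* One common left multiple suffices to witness equivalence, thanks to the Ore condition. *)
Lemma feq_intro a b p q : regular a -> regden q ->
  a * p.1 = b * q.1 -> a * p.2 = b * q.2 -> feq p q.
Proof.
move=> ra rq e1 e2 u v e.
have [c [d [rc ecd]]] := ore.2 u a ra.
have edb : d * b = c * v.
  by apply: (regular_mulIf rq); rewrite -mulrA -e1 mulrA -ecd -mulrA e mulrA.
by apply: (regular_mulfI rc); rewrite !mulrA ecd -mulrA e2 mulrA edb.
Qed.

Lemma feq_scale u p : regden p -> feq (u * p.1, u * p.2) p.
Proof.
by move=> rp; apply: (feq_intro (a := 1) (b := u)); rewrite ?mul1r //; exact: regular1.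
Qed.

(* The junk value [(1, 0)] is only returned when [s] is not regular. *)
Definition ore_pair r s : R * R :=
  match pselect (exists p : R * R, regular p.1 /\ p.1 * r = p.2 * s) with
  | left h => proj1_sig (cid h)
  | right _ => (1, 0)
  end.

Lemma ore_pairP r s :
  regular s -> regular (ore_pair r s).1 /\ (ore_pair r s).1 * r = (ore_pair r s).2 * s.
Proof.
move=> rs; rewrite /ore_pair; case: pselect => [h|n]; first exact: (proj2_sig (cid h)).
exfalso; apply: n; have [a [b [ra e]]] := ore.2 r s rs.
by exists (a, b).
Qed.

(* [s^-1 r + t^-1 n = (a s)^-1 (a r + b n)] where [a s = b t], and
   [s^-1 r * t^-1 n = (c s)^-1 (d n)] where [c r = d t]. *)
Definition fadd p q := let o := ore_pair p.1 q.1 in (o.1 * p.1, o.1 * p.2 + o.2 * q.2).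
Definition fmul p q := let o := ore_pair p.2 q.1 in (o.1 * p.1, o.2 * q.2).
Definition fopp p := (p.1, - p.2).

Lemma regden_fadd p q : regden p -> regden q -> regden (fadd p q).
Proof. by move=> hp hq; apply: regularM => //; case: (ore_pairP p.1 hq). Qed.
Lemma regden_fmul p q : regden p -> regden q -> regden (fmul p q).
Proof. by move=> hp hq; apply: regularM => //; case: (ore_pairP p.2 hq). Qed.
Lemma regden_fopp p : regden p -> regden (fopp p). Proof. by []. Qed.

Lemma fadd_sameden p q t n1 n2 : regden p -> regden q -> regular t ->
  feq p (t, n1) -> feq q (t, n2) -> feq (fadd p q) (t, n1 + n2).
Proof.
move=> hp hq rt h1 h2; rewrite /fadd.
have [ra eab] := ore_pairP p.1 hq.
set a := (ore_pair p.1 q.1).1 in ra eab *; set b := (ore_pair p.1 q.1).2 in eab *.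
have [c [d [rc ecd]]] := ore.2 (a * p.1) t rt.
apply: (feq_intro (a := c) (b := d)) => //=.
have e1 : (c * a) * p.1 = d * t by rewrite -mulrA.
have e2 : (c * b) * q.1 = d * t by rewrite -mulrA -eab.
rewrite mulrDr !mulrA (h1 _ _ e1) (h2 _ _ e2) /=.
by rewrite mulrDr.
Qed.

Lemma common_den p q : regden p -> regden q ->
  exists t n1 n2, [/\ regular t, feq p (t, n1) & feq q (t, n2)].
Proof.
move=> hp hq; have [ra eab] := ore_pairP p.1 hq.
set a := (ore_pair p.1 q.1).1 in ra eab *; set b := (ore_pair p.1 q.1).2 in eab *.
exists (a * p.1), (a * p.2), (b * q.2); split.
- exact: regularM.
- by apply: feq_sym; apply: feq_scale.
- by rewrite eab; apply: feq_sym; apply: (feq_scale (u := b) hq).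
Qed.

Lemma feq_rescale p t n a : regular t -> regular (a * t) -> feq p (t, n) -> feq p (a * t, a * n).
Proof.
move=> rt rat h; apply: (feq_trans (q := (t, n))) => //.
by apply: feq_sym; apply: (feq_scale (u := a) (p := (t, n))).
Qed.

Lemma common_den3 p q p' : regden p -> regden q -> regden p' ->
  exists t n1 n2 n3, [/\ regular t, feq p (t, n1), feq q (t, n2) & feq p' (t, n3)].
Proof.
move=> hp hq hr; have [t [n1 [n2 [rt h1 h2]]]] := common_den hp hq.
have [ra eab] := ore_pairP t hr.
set a := (ore_pair t p'.1).1 in ra eab *; set b := (ore_pair t p'.1).2 in eab *.
have rat : regular (a * t) by apply: regularM.
exists (a * t), (a * n1), (a * n2), (b * p'.2); split=> //.
- exact: feq_rescale.
- exact: feq_rescale.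
- by rewrite eab; apply: feq_sym; apply: (feq_scale (u := b) hr).
Qed.


Lemma fadd_feq p p' q q' : regden p -> regden p' -> regden q -> regden q' ->
  feq p p' -> feq q q' -> feq (fadd p q) (fadd p' q').
Proof.
move=> hp hp' hq hq' e1 e2.
have [t [n1 [n2 [rt h1 h2]]]] := common_den hp hq.
have h1' : feq p' (t, n1) by apply: (feq_trans hp) => //; apply: feq_sym.
have h2' : feq q' (t, n2) by apply: (feq_trans hq) => //; apply: feq_sym.
apply: (feq_trans (q := (t, n1 + n2))) => //; first exact: fadd_sameden.
by apply: feq_sym; apply: fadd_sameden.
Qed.

Lemma fmul_cross p q c d : regden p -> regden q -> regular (c * p.1) ->
  c * p.2 = d * q.1 -> feq (fmul p q) (c * p.1, d * q.2).
Proof.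
move=> hp hq rc ecd; rewrite /fmul.
have [rc0 e0] := ore_pairP p.2 hq.
set c0 := (ore_pair p.2 q.1).1 in rc0 e0 *; set d0 := (ore_pair p.2 q.1).2 in e0 *.
have [e [e' [re ee]]] := ore.2 (c0 * p.1) (c * p.1) rc.
have ec : e * c0 = e' * c by apply: (regular_mulIf hp); rewrite -!mulrA.
have ed : e * d0 = e' * d.
  by apply: (regular_mulIf hq); rewrite -!mulrA -e0 -ecd !mulrA ec.
apply: (feq_intro (a := e) (b := e')) => //=.
by rewrite !mulrA ed.
Qed.

Lemma fmul_feql p p' q : regden p -> regden p' -> regden q ->
  feq p p' -> feq (fmul p q) (fmul p' q).
Proof.
move=> hp hp' hq e.
have [u [u' [ru eu]]] := ore.2 p.1 p'.1 hp'.
have eu2 := e _ _ eu.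
have [c [d [rc ecd]]] := ore.2 (u * p.2) q.1 hq.
have rw : regular (c * u * p.1) by rewrite -mulrA; apply: regularM => //; apply: regularM.
have s1 : feq (fmul p q) (c * u * p.1, d * q.2).
  by apply: fmul_cross => //; rewrite -mulrA.
have s2 : feq (fmul p' q) (c * u * p.1, d * q.2).
  rewrite -mulrA eu mulrA; apply: fmul_cross => //; first by rewrite -mulrA -eu mulrA.
  by rewrite -mulrA -eu2.
apply: (feq_trans (q := (c * u * p.1, d * q.2))) => //; exact: feq_sym.
Qed.

Lemma fmul_feqr p q q' : regden p -> regden q -> regden q' ->
  feq q q' -> feq (fmul p q) (fmul p q').
Proof.
move=> hp hq hq' e.
have [v [v' [rv ev]]] := ore.2 q.1 q'.1 hq'.
have ev2 := e _ _ ev.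
have [c [d [rc ecd]]] := ore.2 p.2 (v * q.1) (regularM rv hq).
have rcp : regular (c * p.1) by apply: regularM.
have s1 : feq (fmul p q) (c * p.1, d * v * q.2).
  by apply: fmul_cross => //; rewrite -mulrA.
have s2 : feq (fmul p q') (c * p.1, d * v * q.2).
  rewrite -mulrA ev2 mulrA; apply: fmul_cross => //.
  by rewrite -mulrA -ev.
apply: (feq_trans (q := (c * p.1, d * v * q.2))) => //; exact: feq_sym.
Qed.

Lemma fmul_feq p p' q q' : regden p -> regden p' -> regden q -> regden q' ->
  feq p p' -> feq q q' -> feq (fmul p q) (fmul p' q').
Proof.
move=> hp hp' hq hq' e1 e2.
apply: (feq_trans (q := fmul p' q)); first exact: regden_fmul.
  exact: fmul_feql.
exact: fmul_feqr.
Qed.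

Lemma fopp_feq p p' : feq p p' -> feq (fopp p) (fopp p').
Proof. by move=> h u v e; rewrite /= !mulrN (h _ _ e). Qed.

Lemma regden_const n : regden (1, n). Proof. exact: regular1. Qed.

Lemma faddA p q p' : regden p -> regden q -> regden p' ->
  feq (fadd p (fadd q p')) (fadd (fadd p q) p').
Proof.
move=> hp hq hr; have [t [n1 [n2 [n3 [rt h1 h2 h3]]]]] := common_den3 hp hq hr.
apply: (feq_trans (q := (t, n1 + (n2 + n3)))) => //.
  apply: fadd_sameden => //; first exact: regden_fadd.
  exact: fadd_sameden.
rewrite addrA; apply: feq_sym; apply: fadd_sameden => //; first exact: regden_fadd.
exact: fadd_sameden.
Qed.

Lemma faddC p q : regden p -> regden q -> feq (fadd p q) (fadd q p).
Proof.
move=> hp hq; have [t [n1 [n2 [rt h1 h2]]]] := common_den hp hq.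
apply: (feq_trans (q := (t, n1 + n2))) => //; first exact: fadd_sameden.
by rewrite addrC; apply: feq_sym; apply: fadd_sameden.
Qed.

Lemma fadd0r p : regden p -> feq (fadd (1, 0) p) p.
Proof.
move=> hp; have e0 : feq (1, 0) (p.1, 0).
  have := feq_scale (u := p.1) (regden_const 0); rewrite mulr1 mulr0 => h; exact: feq_sym.
have := fadd_sameden (regden_const 0) hp hp e0 (feq_refl hp); rewrite add0r.
by case: p hp {e0}.
Qed.

Lemma faddNr p : regden p -> feq (fadd (fopp p) p) (1, 0).
Proof.
move=> hp; have := @fadd_sameden (fopp p) p p.1 (- p.2) p.2 (regden_fopp hp) hp hp
  (feq_refl (p := (p.1, - p.2)) hp) (feq_refl (p := (p.1, p.2)) hp).
rewrite addNr => h; apply: (feq_trans (q := (p.1, 0))) => //.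
by have := feq_scale (u := p.1) (regden_const 0); rewrite mulr1 mulr0.
Qed.

Lemma fmul1r p : regden p -> feq (fmul (1, 1) p) p.
Proof.
move=> hp; have : feq (fmul (1, 1) p) (p.1 * 1, 1 * p.2).
  by apply: fmul_cross => //; [exact: regden_const | rewrite mulr1 | rewrite mulr1 mul1r].
by rewrite mulr1 mul1r; case: p hp.
Qed.

Lemma fmulr1 p : regden p -> feq (fmul p (1, 1)) p.
Proof.
move=> hp; have : feq (fmul p (1, 1)) (1 * p.1, p.2 * 1).
  by apply: fmul_cross => //; [exact: regden_const | rewrite mul1r | rewrite mul1r mulr1].
by rewrite mul1r mulr1; case: p hp.
Qed.

Lemma fmulA p q p' : regden p -> regden q -> regden p' ->
  feq (fmul p (fmul q p')) (fmul (fmul p q) p').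
Proof.
move=> hp hq hr.
have [rc e1] := ore_pairP p.2 hq.
set c := (ore_pair p.2 q.1).1 in rc e1 *; set d := (ore_pair p.2 q.1).2 in e1 *.
have [re e2] := ore_pairP (d * q.2) hr.
set e := (ore_pair (d * q.2) p'.1).1 in re e2 *; set g := (ore_pair (d * q.2) p'.1).2 in e2 *.
have [rc' e3] := ore_pairP q.2 hr.
set c' := (ore_pair q.2 p'.1).1 in rc' e3 *; set d' := (ore_pair q.2 p'.1).2 in e3 *.
have [k [D [rk ekD]]] := ore.2 (e * d) c' rc'.
have hqr : regden (fmul q p') by apply: regden_fmul.
have rC : regular (k * e * c * p.1).
  by apply: regularM => //; apply: regularM => //; apply: regularM.
have mqr : fmul q p' = (c' * q.1, d' * p'.2) := erefl.
have mpq : fmul (fmul p q) p' = (e * (c * p.1), g * p'.2) := erefl.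
have s1 : feq (fmul p (fmul q p')) (k * e * c * p.1, D * (d' * p'.2)).
  rewrite mqr; apply: (fmul_cross (c := k * e * c) (d := D)) => //=.
  by rewrite -!mulrA e1 !mulrA -(mulrA k) ekD.
have s2 : feq (fmul (fmul p q) p') (k * e * c * p.1, k * g * p'.2).
  rewrite mpq; apply: feq_sym.
  have := feq_scale (u := k) (p := (e * (c * p.1), g * p'.2)); rewrite /= !mulrA; apply.
  by apply: regularM => //; apply: regularM.
have eD : D * d' = k * g.
  apply: (regular_mulIf hr); rewrite -!mulrA -e3 -e2 !mulrA -(mulrA k) ekD //.
apply: (feq_trans (q := (k * e * c * p.1, k * g * p'.2))) => //; first by rewrite mulrA eD in s1.
exact: feq_sym.
Qed.

Lemma fmulDl p q p' : regden p -> regden q -> regden p' ->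
  feq (fmul (fadd p q) p') (fadd (fmul p p') (fmul q p')).
Proof.
move=> hp hq hr; have [t [n1 [n2 [rt h1 h2]]]] := common_den hp hq.
have [rc1 e1] := ore_pairP n1 hr.
set c1 := (ore_pair n1 p'.1).1 in rc1 e1 *; set d1 := (ore_pair n1 p'.1).2 in e1 *.
have [rc2 e2] := ore_pairP (c1 * n2) hr.
set c2 := (ore_pair (c1 * n2) p'.1).1 in rc2 e2 *; set d2 := (ore_pair (c1 * n2) p'.1).2 in e2 *.
have rCt : regular (c2 * c1 * t) by apply: regularM => //; apply: regularM.
have X1 : feq (fmul (t, n1 + n2) p') (c2 * c1 * t, (c2 * d1 + d2) * p'.2).
  apply: fmul_cross => //=; rewrite mulrDr mulrDl -!mulrA e1 e2 !mulrA //.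
have X2 : feq (fmul p p') (c2 * c1 * t, c2 * d1 * p'.2).
  apply: (feq_trans (q := fmul (t, n1) p')); first exact: regden_fmul.
    exact: fmul_feql.
  apply: fmul_cross => //=; rewrite -!mulrA e1 //.
have X3 : feq (fmul q p') (c2 * c1 * t, d2 * p'.2).
  apply: (feq_trans (q := fmul (t, n2) p')); first exact: regden_fmul.
    exact: fmul_feql.
  apply: fmul_cross => //=; rewrite -!mulrA e2 //.
apply: (feq_trans (q := fmul (t, n1 + n2) p')); first exact: regden_fmul.
  apply: fmul_feql => //; first exact: regden_fadd.
  exact: fadd_sameden.
apply: (feq_trans (q := (c2 * c1 * t, (c2 * d1 + d2) * p'.2))) => //.
rewrite mulrDl; apply: feq_sym; apply: fadd_sameden => //; exact: regden_fmul.
Qed.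

Lemma fmulDr p q p' : regden p -> regden q -> regden p' ->
  feq (fmul p (fadd q p')) (fadd (fmul p q) (fmul p p')).
Proof.
move=> hp hq hr; have [t [n1 [n2 [rt h1 h2]]]] := common_den hq hr.
have [c [d [rc ecd]]] := ore.2 p.2 t rt.
have rcp : regular (c * p.1) by apply: regularM.
have X1 : feq (fmul p (t, n1 + n2)) (c * p.1, d * (n1 + n2)) by apply: fmul_cross.
have X2 : feq (fmul p q) (c * p.1, d * n1).
  apply: (feq_trans (q := fmul p (t, n1))); first exact: regden_fmul.
    exact: fmul_feqr.
  by apply: fmul_cross.
have X3 : feq (fmul p p') (c * p.1, d * n2).
  apply: (feq_trans (q := fmul p (t, n2))); first exact: regden_fmul.
    exact: fmul_feqr.
  by apply: fmul_cross.
apply: (feq_trans (q := fmul p (t, n1 + n2))); first exact: regden_fmul.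
  apply: fmul_feqr => //; first exact: regden_fadd.
  exact: fadd_sameden.
apply: (feq_trans (q := (c * p.1, d * (n1 + n2)))) => //.
rewrite mulrDr; apply: feq_sym; apply: fadd_sameden => //; exact: regden_fmul.
Qed.

Lemma fadd_const a b : feq (fadd (1, a) (1, b)) (1, a + b).
Proof. by apply: fadd_sameden; try exact: regden_const; apply: feq_refl; exact: regden_const. Qed.

Lemma fmul_const a b : feq (fmul (1, a) (1, b)) (1, a * b).
Proof.
have : feq (fmul (1, a) (1, b)) (1 * 1, a * b).
  by apply: fmul_cross; rewrite /= ?mulr1 ?mul1r //; exact: regden_const.
by rewrite mulr1.
Qed.

Lemma fmulVr s : regular s -> feq (fmul (s, 1) (1, s)) (1, 1).
Proof.
move=> rs; apply: (feq_trans (q := (1 * s, 1 * s))).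
- by rewrite /regden mul1r.
- by apply: fmul_cross; rewrite /= ?mul1r //; exact: regden_const.
- by have := feq_scale (u := s) (regden_const 1); rewrite mulr1 mul1r.
Qed.

Lemma fmulrV s : regular s -> feq (fmul (1, s) (s, 1)) (1, 1).
Proof.
move=> rs; have : feq (fmul (1, s) (s, 1)) (1 * 1, 1 * 1).
  by apply: fmul_cross; rewrite /= ?mul1r //; exact: regden_const.
by rewrite mul1r.
Qed.

Lemma fmul_den s r : regular s -> feq (fmul (1, s) (s, r)) (1, r).
Proof.
move=> rs; have : feq (fmul (1, s) (s, r)) (1 * 1, 1 * r).
  by apply: fmul_cross; rewrite /= ?mul1r //; exact: regden_const.
by rewrite !mul1r.
Qed.

Lemma feq_const0 r : feq (1, r) (1, 0) -> r = 0.
Proof. by move=> h; have := h 1 1 erefl; rewrite !mul1r. Qed.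

Local Open Scope quotient_scope.

Definition regpair := {p : R * R | `[< regular p.1 >]}.
Definition regpair1 : regpair := exist _ (1, 1) (asboolT (@regular1 R)).
Definition to_regpair (p : R * R) : regpair := insubd regpair1 p.

Lemma to_regpairE p : regular p.1 -> val (to_regpair p) = p.
Proof. by move=> h; rewrite /to_regpair val_insubd (asboolT h). Qed.

Lemma regpair_regden (x : regpair) : regden (val x).
Proof. exact: (asboolW (valP x)). Qed.

Lemma to_regpairK (x : regpair) : to_regpair (val x) = x.
Proof. by apply: val_inj; rewrite to_regpairE //; exact: regpair_regden. Qed.

Definition regpair_eqv (x y : regpair) : bool := `[< feq (val x) (val y) >].

Lemma regpair_eqv_refl : reflexive regpair_eqv.
Proof. by move=> x; apply/asboolP; apply: feq_refl; exact: regpair_regden. Qed.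
Lemma regpair_eqv_sym : symmetric regpair_eqv.
Proof.
by move=> x y; apply/asboolP/asboolP => /feq_sym.
Qed.
Lemma regpair_eqv_trans : transitive regpair_eqv.
Proof.
move=> y x z /asboolP h1 /asboolP h2; apply/asboolP.
exact: (feq_trans (regpair_regden y) h1 h2).
Qed.

Canonical regpair_equiv := EquivRel regpair_eqv regpair_eqv_refl regpair_eqv_sym regpair_eqv_trans.
Definition ore_loc := {eq_quot regpair_eqv}.
HB.instance Definition _ : EqQuotient _ regpair_eqv ore_loc := EqQuotient.on ore_loc.
HB.instance Definition _ := Choice.on ore_loc.

Definition frac (p : R * R) : ore_loc := \pi_ore_loc (to_regpair p).

Lemma frac_eqP p q : regden p -> regden q -> frac p = frac q <-> feq p q.
Proof.
move=> hp hq; rewrite /frac; split.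
  by move/eqmodP/asboolP; rewrite !to_regpairE.
by move=> h; apply/eqmodP/asboolP; rewrite !to_regpairE.
Qed.

Lemma frac_ind (P : ore_loc -> Prop) :
  (forall p, regden p -> P (frac p)) -> forall x : ore_loc, P x.
Proof.
move=> h; elim/quotW => x; rewrite -(to_regpairK x); apply: h; exact: regpair_regden.
Qed.

Definition frac_repr (a : ore_loc) : R * R := val (repr a).
Lemma frac_repr_regden (x : ore_loc) : regden (frac_repr x). Proof. exact: regpair_regden. Qed.
Lemma frac_reprE p : regden p -> feq (frac_repr (frac p)) p.
Proof.
move=> hp; have := reprK (frac p); rewrite -[repr _]to_regpairK.
by move/(frac_eqP (frac_repr_regden _) hp).
Qed.

Local Hint Resolve regden_fadd regden_fmul regden_fopp regden_const frac_repr_regden : core.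

Lemma frac_feq p q : regden p -> regden q -> feq p q -> frac p = frac q.
Proof. by move=> hp hq /(frac_eqP hp hq). Qed.

Definition loc0 : ore_loc := frac (1, 0).
Definition loc1 : ore_loc := frac (1, 1).
Definition loc_add (a b : ore_loc) : ore_loc := frac (fadd (frac_repr a) (frac_repr b)).
Definition loc_opp (a : ore_loc) : ore_loc := frac (fopp (frac_repr a)).
Definition loc_mul (a b : ore_loc) : ore_loc := frac (fmul (frac_repr a) (frac_repr b)).

Lemma loc_addE p q : regden p -> regden q -> loc_add (frac p) (frac q) = frac (fadd p q).
Proof.
move=> hp hq; apply/frac_eqP; try apply: regden_fadd => //; try exact: frac_repr_regden.
by apply: fadd_feq => //; try exact: frac_repr_regden; apply: frac_reprE.
Qed.

Lemma loc_oppE p : regden p -> loc_opp (frac p) = frac (fopp p).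
Proof.
move=> hp; apply/frac_eqP; try apply: regden_fopp => //; try exact: frac_repr_regden.
by apply: fopp_feq; apply: frac_reprE.
Qed.

Lemma loc_mulE p q : regden p -> regden q -> loc_mul (frac p) (frac q) = frac (fmul p q).
Proof.
move=> hp hq; apply/frac_eqP; try apply: regden_fmul => //; try exact: frac_repr_regden.
by apply: fmul_feq => //; try exact: frac_repr_regden; apply: frac_reprE.
Qed.

Lemma loc_addA : associative loc_add.
Proof.
elim/frac_ind => p hp; elim/frac_ind => q hq; elim/frac_ind => r hr.
rewrite (loc_addE hq hr) (loc_addE hp hq).
rewrite (loc_addE hp (regden_fadd hq hr)) (loc_addE (regden_fadd hp hq) hr).
apply: frac_feq; try by auto.
apply: faddA; by auto.
Qed.

Lemma loc_addC : commutative loc_add.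
Proof.
elim/frac_ind => p hp; elim/frac_ind => q hq; rewrite !loc_addE; try by auto.
apply: frac_feq; try by auto.
apply: faddC; by auto.
Qed.

Lemma loc_add0r : left_id loc0 loc_add.
Proof.
elim/frac_ind => p hp; rewrite loc_addE; try by auto.
apply: frac_feq; try by auto.
apply: fadd0r; by auto.
Qed.

Lemma loc_addNr : left_inverse loc0 loc_opp loc_add.
Proof.
elim/frac_ind => p hp; rewrite loc_oppE // loc_addE; try by auto.
apply: frac_feq; try by auto.
apply: faddNr; by auto.
Qed.

HB.instance Definition _ := GRing.isZmodule.Build ore_loc loc_addA loc_addC loc_add0r loc_addNr.

Lemma loc_mulA : associative loc_mul.
Proof.
elim/frac_ind => p hp; elim/frac_ind => q hq; elim/frac_ind => r hr.
rewrite (loc_mulE hq hr) (loc_mulE hp hq).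
rewrite (loc_mulE hp (regden_fmul hq hr)) (loc_mulE (regden_fmul hp hq) hr).
apply: frac_feq; try by auto.
apply: fmulA; by auto.
Qed.

Lemma loc_mul1r : left_id loc1 loc_mul.
Proof.
elim/frac_ind => p hp; rewrite loc_mulE; try by auto.
apply: frac_feq; try by auto.
apply: fmul1r; by auto.
Qed.

Lemma loc_mulr1 : right_id loc1 loc_mul.
Proof.
elim/frac_ind => p hp; rewrite loc_mulE; try by auto.
apply: frac_feq; try by auto.
apply: fmulr1; by auto.
Qed.

Lemma loc_mulDl : left_distributive loc_mul loc_add.
Proof.
elim/frac_ind => p hp; elim/frac_ind => q hq; elim/frac_ind => r hr.
rewrite (loc_addE hp hq) (loc_mulE hp hr) (loc_mulE hq hr) (loc_mulE (regden_fadd hp hq) hr).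
rewrite (loc_addE (regden_fmul hp hr) (regden_fmul hq hr)).
apply: frac_feq; try by auto.
apply: fmulDl; by auto.
Qed.

Lemma loc_mulDr : right_distributive loc_mul loc_add.
Proof.
elim/frac_ind => p hp; elim/frac_ind => q hq; elim/frac_ind => r hr.
rewrite (loc_addE hq hr) (loc_mulE hp hq) (loc_mulE hp hr) (loc_mulE hp (regden_fadd hq hr)).
rewrite (loc_addE (regden_fmul hp hq) (regden_fmul hp hr)).
apply: frac_feq; try by auto.
apply: fmulDr; by auto.
Qed.

Lemma loc1_neq0 : loc1 != loc0.
Proof.
apply/eqP => /frac_eqP; move=> /(_ (regden_const _) (regden_const _)) /feq_const0.
by move/eqP; rewrite oner_eq0.
Qed.

HB.instance Definition _ := GRing.Zmodule_isNzRing.Build ore_loc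
  loc_mulA loc_mul1r loc_mulr1 loc_mulDl loc_mulDr loc1_neq0.

Definition loc_embed (r : R) : ore_loc := frac (1, r).

Lemma loc_embed_zmod : zmod_morphism loc_embed.
Proof.
move=> x y; change (loc_embed (x - y) = loc_add (loc_embed x) (loc_opp (loc_embed y))).
rewrite /loc_embed (loc_oppE (regden_const y)).
rewrite (loc_addE (regden_const x) (regden_fopp (regden_const y))).
apply: frac_feq; try by auto.
apply: feq_sym; exact: fadd_const.
Qed.

Lemma loc_embed_monoid : monoid_morphism loc_embed.
Proof.
split=> // x y; change (loc_embed (x * y) = loc_mul (loc_embed x) (loc_embed y)).
rewrite /loc_embed (loc_mulE (regden_const x) (regden_const y)); apply: frac_feq; try by auto.
apply: feq_sym; exact: fmul_const.
Qed.

HB.instance Definition _ := GRing.isZmodMorphism.Build R ore_loc loc_embed loc_embed_zmod.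
HB.instance Definition _ := GRing.isMonoidMorphism.Build R ore_loc loc_embed loc_embed_monoid.

Lemma loc_embed_quotient : is_left_quotient (@regular R) (loc_embed : {rmorphism R -> ore_loc}).
Proof.
split.
- move=> s rs; exists (frac (s, 1)); split.
    change (loc_mul (frac (s, 1)) (frac (1, s)) = loc1).
    rewrite loc_mulE //; apply: frac_feq; try by auto.
    exact: fmulVr.
  change (loc_mul (frac (1, s)) (frac (s, 1)) = loc1).
  rewrite loc_mulE //; apply: frac_feq; try by auto.
  exact: fmulrV.
- elim/frac_ind => -[s r] hp; exists s, r; split=> //.
  change (loc_mul (frac (1, s)) (frac (s, r)) = frac (1, r)).
  rewrite loc_mulE //; apply: frac_feq; try by auto.
  exact: fmul_den.
- move=> r; split.
    move=> e; exists 1; split; first exact: regular1.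
    rewrite mul1r; apply: feq_const0; apply/frac_eqP => //.
  by move=> [s [[h _] e]]; rewrite (h _ e) rmorph0.
Qed.

End OreFractions.

Lemma exists_left_quotient (R : nzRingType) : left_ore (@regular R) ->
  exists (Q : nzRingType) (f : {rmorphism R -> Q}), is_left_quotient (@regular R) f.
Proof.
move=> ore; exists (ore_loc ore), (loc_embed ore : {rmorphism R -> ore_loc ore}).
exact: loc_embed_quotient.
Qed.


Theorem goldie_essential_iff_regular (R : nzRingType) :
  [/\ finite_left_rank R, acc_left_annihilators R & semiprime R] <->
  essential_iff_regular R.
Proof.
split=> [[fr acc sp] L hL|ereg].
  by split; [exact: essential_regular | exact: regular_essential].
split; [exact: essential_iff_regular_finite_left_rank |
        exact: essential_iff_regular_acc | exact: essential_iff_regular_semiprime].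
Qed.

Theorem semisimple_quotient_essential_iff_regular (R : nzRingType) :
  (left_ore (@regular R) /\ exists (Q : nzRingType) (f : {rmorphism R -> Q}),
     is_left_quotient (@regular R) f /\ semisimple Q) <->
  essential_iff_regular R.
Proof.
split=> [[ore [Q [f [hf ss]]]]|ereg]; first exact: semisimple_essential_iff_regular hf ss.
have ore := essential_iff_regular_ore ereg; have [Q [f hf]] := exists_left_quotient ore.
by split=> //; exists Q, f; split=> //; exact: essential_iff_regular_semisimple ore hf ereg.
Qed.

Theorem theorem2p9 (R : nzRingType) :
  let c1 := exists (Q : nzRingType) (f : {rmorphism R -> Q}),
              is_left_quotient (@S0 R) f /\ semisimple Q in
  let c2 := left_ore (@regular R) /\
            exists (Q : nzRingType) (f : {rmorphism R -> Q}),
              is_left_quotient (@regular R) f /\ semisimple Q in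
  let c3 := exists (Q : nzRingType) (f : {rmorphism R -> Q}),
              [/\ semisimple Q, left_ore (@regular R) &
                  is_left_quotient (@regular R) f] in
  let c4 := [/\ finite_left_rank R, acc_left_annihilators R & semiprime R] in
  let c5 := forall L : R -> Prop, left_ideal L ->
              (essential L <-> exists x, regular x /\ L x) in
  [<-> c1; c2; c3; c4; c5] /\
  ((c1 \/ c2 \/ c3 \/ c4 \/ c5) ->
     (forall x : R, S0 x <-> regular x) /\
     (forall (Q : nzRingType) (f : {rmorphism R -> Q}),
        is_left_quotient (@S0 R) f <-> is_left_quotient (@regular R) f)).
Proof.
move=> c1 c2 c3 c4 c5.
have c12 : c1 <-> c2.
  split=> [[Q [f [hf ss]]]|[ore [Q [f [hf ss]]]]].
    by have [ore hf'] := S0_semisimple_quotient hf ss; split=> //; exists Q, f.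
  exists Q, f; split=> //; apply: is_left_quotient_ext hf => x.
  exact: iff_sym (S0_eq_regular ore x).
have c23 : c2 <-> c3.
  by split=> [[ore [Q [f [hf ss]]]]|[Q [f [ss ore hf]]]]; [exists Q, f | split=> //; exists Q, f].
have c25 : c2 <-> c5 := semisimple_quotient_essential_iff_regular R.
have c45 : c4 <-> c5 := goldie_essential_iff_regular R.
split.
  apply: AllIffConj; first exact: c12.1.
  apply: AllIffConj; first exact: c23.1.
  apply: AllIffConj; first by move/c23.2/c25.1/c45.2.
  apply: AllIffConj; first exact: c45.1.
  by move/c25.2/c12.2.
move=> hc; have [ore _] : c2.
  by case: hc => [/c12.1|[|[/c23.2|[/c45.1/c25.2|/c25.2]]]].
split=> [|Q f]; first exact: S0_eq_regular.
by split; apply: is_left_quotient_ext => x; [|apply: iff_sym]; exact: S0_eq_regular.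
Qed.
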